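(* Fix $\gamma \ge 1$, $\beta \in (0,1)$ and $r > 0$ with $r < \beta$. Let $\Psi$ be a continuous survival function that is asymptotically generalized Gaussian on the right with exponent $\gamma$. For each $n$, let $m = \lfloor n^{1-\beta} \rfloor$ and $\mu = (\gamma r \log n)^{1/\gamma}$, and draw a subset $\mathscr{F} \subset [n]$ of size $m$ uniformly at random. Set $\mu_i = \mu$ for $i \in \mathscr{F}$ and $\mu_i = 0$ otherwise. Let $X_1,\dots,X_n$ be independent with $X_i$ having survival function $\Psi(\cdot - \mu_i)$. Then the oracle risk satisfies $$\liminf_{n\to\infty} \mathbb{E}\Big[\min_{t \in \mathbb{R}} \big(\mathrm{FDP}(\mathscr{R}_t) + \mathrm{FNP}(\mathscr{R}_t)\big)\Big] \ge 1.$$ Here the oracle threshold $\tau_o$ is any minimizer of $t \mapsto \mathrm{FDP}(\mathscr{R}_t)+\mathrm{FNP}(\mathscr{R}_t)$ over $t \in \mathbb{R}$, and the oracle risk is $\mathbb{E}[\mathrm{FDP}(\mathscr{R}_{\tau_o})+\mathrm{FNP}(\mathscr{R}_{\tau_o})]$.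
   Context: The survival function of a random variable $Y$ is $y \mapsto \mathbb{P}(Y \ge y)$. A survival function $\Psi$ is asymptotically generalized Gaussian (AGG) on the right with exponent $\gamma>0$ if $\lim_{x\to\infty} x^{-\gamma}\log\Psi(x) = -1/\gamma$. The $i$-th null hypothesis is $\mu_i = 0$, and $\mathscr{F}$ is the set of false nulls. For a set $\mathscr{R} \subset [n]=\{1,\dots,n\}$ of rejected hypotheses: - $\mathrm{FDP}(\mathscr{R}) = |\mathscr{R}\setminus\mathscr{F}|/|\mathscr{R}|$, - $\mathrm{FNP}(\mathscr{R}) = |\mathscr{F}\setminus\mathscr{R}|/|\mathscr{F}|$, with the convention $0/0=0$. For $t \in \mathbb{R}$, $\mathscr{R}_t = \{i : X_i \ge t\}$. *)

From HB Require Import structures.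
From mathcomp Require Import all_boot all_order all_algebra.
From mathcomp Require Import all_classical all_reals all_analysis.
Set Implicit Arguments. Unset Strict Implicit. Unset Printing Implicit Defensive.
Import Order.TTheory GRing.Theory Num.Theory.
Import numFieldNormedType.Exports.
Local Open Scope classical_set_scope.
Local Open Scope ring_scope.

Definition is_survival_function (R : realType) (Psi : R -> R) : Prop :=
  exists Q : probability R R, forall y : R, (Psi y)%:E = Q [set z : R | y <= z].

Definition AGG_right (R : realType) (gamma : R) (Psi : R -> R) : Prop :=
  (fun x : R => x `^ (- gamma) * ln (Psi x)) @ +oo%R --> (- gamma^-1 : R).

(* FDP / FNP with the convention 0/0 = 0 *)
Definition FDP (R : realType) (n : nat) (Rj Fs : {set 'I_n}) : R :=
  if #|Rj| == 0%N then 0 else (#|Rj :\: Fs|%:R / #|Rj|%:R).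
Definition FNP (R : realType) (n : nat) (Rj Fs : {set 'I_n}) : R :=
  if #|Fs| == 0%N then 0 else (#|Fs :\: Rj|%:R / #|Fs|%:R).

Definition rej_set (R : realType) (n : nat) (x : 'I_n -> R) (t : R) : {set 'I_n} :=
  [set i | t <= x i].

(* min over t in R of FDP(R_t) + FNP(R_t) (the set of values is finite and
   nonempty, so the infimum is attained) *)
Definition oracle_loss (R : realType) (n : nat) (Fs : {set 'I_n}) (x : 'I_n -> R) : R :=
  inf [set @FDP R n (rej_set x t) Fs + @FNP R n (rej_set x t) Fs | t in [set: R]].

Definition m_n (R : realType) (beta : R) (n : nat) : nat :=
  Num.truncn ((n%:R : R) `^ (1 - beta)).
Definition mu_n (R : realType) (gamma r : R) (n : nat) : R :=
  (gamma * r * ln (n%:R : R)) `^ (gamma^-1).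

From HB Require Import structures.
From mathcomp Require Import all_boot all_order all_algebra.
From mathcomp Require Import all_classical all_reals all_analysis.
From mathcomp Require Import ring lra.
Set Implicit Arguments. Unset Strict Implicit. Unset Printing Implicit Defensive.
Import Order.TTheory GRing.Theory Num.Theory.
Import numFieldNormedType.Exports.
Local Open Scope classical_set_scope.
Local Open Scope ring_scope.

(* Fix K >= 1 and a threshold u with (n - m) Psi(u) = K m. Let V and S count
   the nulls and the signals above u. Any oracle threshold t <= u has
   FDP >= V / (V + m), any t > u has FNP >= 1 - S / m, and both dominate the
   quadratic minorant q(V) - S / m with
   q(V) = K / (K + 2) (2 V / (K m) - (V / (K m))^2).
   Its expectation only involves single and pairwise exceedance probabilities,
   and since E[V] = K m it is at least (K - 1) / (K + 2) - Psi(u - mu).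
   As Psi(u) is of order K n^-beta, the AGG tail forces
   u >= (rho gamma log n)^(1/gamma) for some rho > r, so u - mu -> +oo and
   Psi(u - mu) -> 0; letting K -> +oo gives the bound 1. *)

Section QuadraticMinorant.
Variable R : realFieldType.
Implicit Types K m V : R.

Definition quad_minorant K m V : R :=
  K / (K + 2) * (2 * (V / (K * m)) - (V / (K * m)) ^+ 2).

Lemma quad_minorant0 K m : quad_minorant K m 0 = 0.
Proof. by rewrite /quad_minorant mul0r; ring. Qed.

Lemma quad_minorant_le1 K m V : 0 <= K -> quad_minorant K m V <= 1.
Proof.
move=> K0; set s := V / (K * m); rewrite /quad_minorant -/s.
have c0 : 0 <= K / (K + 2) by rewrite divr_ge0 //; lra.
have c1 : K / (K + 2) <= 1 by rewrite ler_pdivrMr; lra.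
have s1 : 2 * s - s ^+ 2 <= 1 by have := sqr_ge0 (s - 1); rewrite sqrrB; lra.
have [s0|s0] := lerP 0 (2 * s - s ^+ 2).
  by apply: le_trans (ler_pM c0 s0 c1 s1) _; rewrite mulr1.
by apply: le_trans (_ : 0 <= 1) => //; apply: mulr_ge0_le0 => //; exact: ltW.
Qed.

(* With s = V / m the difference factors as s ((K - s)^2 + s) / (K (K + 2) (s + 1)). *)
Lemma quad_minorant_le_ratio K m V : 1 <= K -> 0 < m -> 0 <= V ->
  quad_minorant K m V <= V / (V + m).
Proof.
move=> K1 m0 V0.
have s0 : 0 <= V / m by rewrite divr_ge0 // ltW.
rewrite -subr_ge0.
have -> : V / (V + m) - quad_minorant K m V =
    V / m * ((K - V / m) ^+ 2 + V / m) / (K * (K + 2) * (V / m + 1)).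
  have [mN VmN KN K2N] : [/\ m != 0, V + m != 0, K != 0 & K + 2 != 0].
    by split; apply/negP => /eqP; lra.
  by rewrite /quad_minorant; field; rewrite mN VmN KN K2N.
have sq := sqr_ge0 (K - V / m).
by apply: divr_ge0; apply: mulr_ge0 => //; try lra; apply: mulr_ge0; lra.
Qed.

End QuadraticMinorant.

Section OracleLossLowerBound.
Variables (R : realType) (n : nat) (Fs : {set 'I_n}) (x : 'I_n -> R).

Let loss (t : R) : R := FDP R (rej_set x t) Fs + FNP R (rej_set x t) Fs.

Lemma FDP_ge0 (Rj : {set 'I_n}) : 0 <= FDP R Rj Fs.
Proof. by rewrite /FDP; case: ifP => // _; rewrite divr_ge0. Qed.

Lemma FNP_ge0 (Rj : {set 'I_n}) : 0 <= FNP R Rj Fs.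
Proof. by rewrite /FNP; case: ifP => // _; rewrite divr_ge0. Qed.

Lemma oracle_loss_ge (L : R) : (forall t, L <= loss t) -> L <= oracle_loss Fs x.
Proof.
move=> Lloss; apply: lb_le_inf; first by exists (loss 0), 0.
by move=> _ [t _ <-]; exact: Lloss.
Qed.

Lemma oracle_loss_ge0 : 0 <= oracle_loss Fs x.
Proof. by apply: oracle_loss_ge => t; rewrite addr_ge0 ?FDP_ge0 ?FNP_ge0. Qed.

Hypothesis Fs_gt0 : (0 < #|Fs|)%N.
Let m : R := #|Fs|%:R.

(* FDP(R_t) >= D / (D + m) >= V / (V + m), with D >= V the numbers of false
   discoveries at levels t and u. *)
Lemma FDP_rej_ge_quad_minorant (K u t : R) : 1 <= K -> t <= u ->
  quad_minorant K m #|rej_set x u :\: Fs|%:R <= FDP R (rej_set x t) Fs.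
Proof.
move=> K1 tu; set V := #|rej_set x u :\: Fs|; set D := #|rej_set x t :\: Fs|.
have m0 : 0 < m by rewrite ltr0n.
have VD : (V <= D)%N.
  apply/subset_leq_card/finset.setSD/fintype.subsetP => i.
  by rewrite !inE => /(le_trans tu).
have rejD : #|rej_set x t| = (#|rej_set x t :&: Fs| + D)%N by rewrite cardsID.
have rejFs : (#|rej_set x t :&: Fs| <= #|Fs|)%N by rewrite subset_leq_card ?subsetIr.
have [rej0|rej0] := eqVneq #|rej_set x t| 0%N.
  have /eqP V0 : V == 0%N by rewrite -leqn0 (leq_trans VD) // -rej0 rejD leq_addl.
  by rewrite V0 quad_minorant0 FDP_ge0.
have FDPE : FDP R (rej_set x t) Fs = D%:R / #|rej_set x t|%:R :> R.
  by rewrite /FDP (negbTE rej0).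
have ratio_le : V%:R / (V%:R + m) <= D%:R / (D%:R + m) :> R.
  rewrite ler_pdivrMr ?ltr_wpDl // mulrAC ler_pdivlMr ?ltr_wpDl //.
  by rewrite !mulrDr mulrC lerD2l ler_wpM2r ?ler_nat // ltW.
apply: le_trans (quad_minorant_le_ratio K1 m0 (ler0n _ _)) _.
apply: (le_trans ratio_le); rewrite FDPE ler_pdivlMr ?ltr0n ?lt0n //.
rewrite mulrAC ler_pdivrMr ?ltr_wpDl // ler_wpM2l //.
by rewrite rejD natrD addrC lerD2l ler_nat.
Qed.

Lemma FNP_rej_ge (u t : R) : u < t ->
  1 - #|Fs :&: rej_set x u|%:R / m <= FNP R (rej_set x t) Fs.
Proof.
move=> ut; have m0 : 0 < m by rewrite ltr0n.
have FNPE : FNP R (rej_set x t) Fs = #|Fs :\: rej_set x t|%:R / m.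
  by rewrite /FNP (negbTE (lt0n_neq0 Fs_gt0)).
rewrite FNPE -[X in X - _](divff (lt0r_neq0 m0)) -mulrBl ler_pM2r ?invr_gt0 //.
rewrite /m -(cardsID (rej_set x u) Fs) natrD addrAC subrr add0r ler_nat.
apply/subset_leq_card/finset.setDS/fintype.subsetP => i; rewrite !inE => ti.
exact: le_trans (ltW ut) ti.
Qed.

Lemma oracle_loss_ge_quad_minorant (K u : R) : 1 <= K ->
  quad_minorant K m #|rej_set x u :\: Fs|%:R - #|Fs :&: rej_set x u|%:R / m
    <= oracle_loss Fs x.
Proof.
move=> K1; apply: oracle_loss_ge => t; rewrite /loss.
have S0 : 0 <= #|Fs :&: rej_set x u|%:R / m by rewrite divr_ge0.
have [tu|ut] := lerP t u.
  have := FDP_rej_ge_quad_minorant K1 tu; have := FNP_ge0 (rej_set x t); lra.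
have := FNP_rej_ge ut; have := FDP_ge0 (rej_set x t).
have := quad_minorant_le1 m #|rej_set x u :\: Fs|%:R (le_trans ler01 K1); lra.
Qed.

End OracleLossLowerBound.

Section HasIntegral.
Context d (T : measurableType d) (R : realType) (mu : {finite_measure set T -> \bar R}).

Definition has_integral (f : T -> R) (v : R) :=
  mu.-integrable setT (EFin \o f) /\ (\int[mu]_w (f w)%:E = v%:E)%E.

Lemma has_integral_indic (A : set T) : measurable A -> has_integral \1_A (fine (mu A)).
Proof.
move=> mA; split; first exact: integrable_indic.
by rewrite integral_indic // setIT fineK // fin_num_measure.
Qed.

Lemma has_integralD f g v w :
  has_integral f v -> has_integral g w -> has_integral (fun x => f x + g x) (v + w).
Proof.
move=> [fi fv] [gi gv]; split.
  by apply: eq_integrable (integrableD measurableT fi gi) => //= x _; rewrite EFinD.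
by under eq_integral do rewrite EFinD; rewrite integralD // fv gv.
Qed.

Lemma has_integralZ f v (c : R) : has_integral f v -> has_integral (fun x => c * f x) (c * v).
Proof.
move=> [fi fv]; split.
  by apply: eq_integrable (integrableZl measurableT c fi) => //= x _; rewrite EFinM.
by under eq_integral do rewrite EFinM; rewrite integralZl // fv.
Qed.

Lemma has_integralB f g v w :
  has_integral f v -> has_integral g w -> has_integral (fun x => f x - g x) (v - w).
Proof.
move=> hf /(has_integralZ (-1)) hg; have := has_integralD hf hg.
by rewrite mulN1r (_ : (fun x => _) = fun x => f x - g x) // funeqE => x; rewrite mulN1r.
Qed.

Lemma has_integral_sum (I : Type) (s : seq I) (P : pred I) (f : I -> T -> R) (v : I -> R) :
  (forall i, P i -> has_integral (f i) (v i)) ->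
  has_integral (fun w => \sum_(i <- s | P i) f i w) (\sum_(i <- s | P i) v i).
Proof.
move=> fv; elim: s => [|i s IHs].
  rewrite big_nil (_ : (fun _ => _) = cst 0); last by apply/funext => w; rewrite big_nil.
  by split; [exact: integrable0 | exact: integral0].
rewrite big_cons (_ : (fun _ => _) = fun w => if P i then f i w + \sum_(j <- s | P j) f j w
  else \sum_(j <- s | P j) f j w); last by apply/funext => w; rewrite big_cons.
by case: ifP => Pi //; exact: has_integralD (fv i Pi) IHs.
Qed.

(* No measurability of [g] is needed: the integral of a nonnegative function is
   a supremum over the simple functions below it. *)
Lemma has_integral_le_integral (f g : T -> R) v : (forall w, 0 <= g w) ->
  (forall w, f w <= g w) -> has_integral f v -> (v%:E <= \int[mu]_w (g w)%:E)%E.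
Proof.
move=> g0 fg [fi <-]; rewrite integralE.
apply: (@le_trans _ _ (\int[mu]_w ((EFin \o f)^\+ w))%E).
  by rewrite leeBlDr ?integrable_neg_fin_num // leeDl // integral_ge0.
rewrite ge0_integralTE => [|w]; last exact: funepos_ge0.
rewrite ge0_integralTE => [|w]; last by rewrite lee_fin.
apply: ereal_sup_le => _ [h /= hf <-]; exists h => //= w.
by apply: le_trans (hf w) _; rewrite funeposE ge_max !lee_fin fg g0.
Qed.

End HasIntegral.

Lemma sum_natb_card (R : pzSemiRingType) (I : finType) (A : {set I}) (b : pred I) :
  \sum_(i in A) (b i)%:R = #|A :&: [set i | b i]|%:R :> R.
Proof.
rewrite -sum1_card natr_sum [RHS]big_mkcond [LHS]big_mkcond /=.
by apply: eq_bigr => i _; rewrite !inE; case: (i \in A); case: (b i).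
Qed.

Section ExceedanceCounts.
Context d (T : measurableType d) (R : realType) (n : nat).
Variables (F : T -> {set 'I_n}) (X : 'I_n -> T -> R) (u : R).
Hypothesis mF : forall S, measurable [set w | F w = S].
Hypothesis mX : forall i, measurable_fun setT (X i).
Implicit Types (S J : {set 'I_n}) (w : T).

Definition exceed_event S J := [set w | F w = S /\ forall k, k \in J -> u <= X k w].

Definition count_above S J w : R := \sum_(i in J) \1_(exceed_event S [set i]) w.

Definition pair_count_above S J w : R :=
  \sum_(i in J) \sum_(j in J) \1_(exceed_event S [set i; j]) w.

Lemma measurable_exceed_event S J : measurable (exceed_event S J).
Proof.
have -> : exceed_event S J =
    [set w | F w = S] `&` \bigcap_(k in [set` J]) (X k @^-1` `[u, +oo[%classic).
  apply/seteqP; split => w /= [FS XJ]; split => // k kJ /=.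
    by rewrite in_itv /= andbT; exact: XJ.
  by have := XJ k kJ; rewrite /= in_itv /= andbT.
apply: measurableI; first exact: mF.
apply: fin_bigcap_measurable; first exact: finite_finpred.
by move=> k _; rewrite -[_ @^-1` _]setTI; exact: mX.
Qed.

Lemma indic_exceed_event S J w :
  \1_(exceed_event S J) w = ((F w == S) && [forall k in J, u <= X k w])%:R :> R.
Proof.
rewrite indicE; congr (nat_of_bool _)%:R; apply/idP/andP.
  by move=> /set_mem [-> XJ]; split => //; apply/forall_inP.
by move=> [/eqP FS /forall_inP XJ]; apply/mem_set.
Qed.

Lemma count_aboveE S J w :
  count_above S J w = (F w == S)%:R * #|J :&: rej_set (X^~ w) u|%:R.
Proof.
rewrite /count_above -sum_natb_card big_distrr; apply: eq_bigr => i _.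
rewrite indic_exceed_event.
have -> : [forall k in [set i]%SET, u <= X k w] = (u <= X i w).
  by apply/forall_inP/idP => [-> //|Xi k]; rewrite inE // => /eqP ->.
by rewrite -mulnb natrM.
Qed.

Lemma pair_count_aboveE S J w :
  pair_count_above S J w = (F w == S)%:R * #|J :&: rej_set (X^~ w) u|%:R ^+ 2.
Proof.
rewrite -sum_natb_card expr2 big_distrlr big_distrr; apply: eq_bigr => i _.
rewrite big_distrr; apply: eq_bigr => j _.
rewrite indic_exceed_event.
have -> : [forall k in [set i; j]%SET, u <= X k w] = (u <= X i w) && (u <= X j w).
  apply/forall_inP/andP => [Xij | [Xi Xj] k].
    by split; apply: Xij; rewrite !inE eqxx ?orbT.
  by rewrite !inE => /orP[] /eqP ->.
by rewrite -!mulnb !natrM.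
Qed.

Variable P : probability T R.

Lemma has_integral_count_above S J :
  has_integral P (count_above S J) (\sum_(i in J) fine (P (exceed_event S [set i]))).
Proof.
by apply: has_integral_sum => i _; apply/has_integral_indic/measurable_exceed_event.
Qed.

Lemma has_integral_pair_count_above S J :
  has_integral P (pair_count_above S J)
    (\sum_(i in J) \sum_(j in J) fine (P (exceed_event S [set i; j]))).
Proof.
apply: has_integral_sum => i _; apply: has_integral_sum => j _.
exact/has_integral_indic/measurable_exceed_event.
Qed.

End ExceedanceCounts.

Section ExpectedOracleLoss.
Context d (T : measurableType d) (R : realType) (P : probability T R) (n : nat).
Variables (F : T -> {set 'I_n}) (X : 'I_n -> T -> R).
Hypothesis mF : forall S, measurable [set w | F w = S].
Hypothesis mX : forall i, measurable_fun setT (X i).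
Variables (m : nat) (Psi : R -> R) (mu u K : R).
Hypothesis m_gt0 : (0 < m)%N.
Hypothesis m_le_n : (m <= n)%N.
Hypothesis K_ge1 : 1 <= K.
Hypothesis P_exceed : forall S : {set 'I_n}, #|S| = m ->
  forall (J : {set 'I_n}) (x : 'I_n -> R),
    P [set w | F w = S /\ forall i, i \in J -> x i <= X i w] =
    (('C(n, m)%:R)^-1 * \prod_(i in J) Psi (x i - (if i \in S then mu else 0)))%:E.
Hypothesis threshold : (n%:R - m%:R) * Psi u = K * m%:R.
Implicit Types (S J : {set 'I_n}) (w : T).

Let Cnm : R := 'C(n, m)%:R.
Let N : R := n%:R - m%:R.
Let p := Psi u.
Let q := Psi (u - mu).
Let E := exceed_event F X u.

Lemma prob_exceed_event S J : #|S| = m ->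
  fine (P (E S J)) = Cnm^-1 * \prod_(i in J) Psi (u - (if i \in S then mu else 0)).
Proof. by move=> Sm; rewrite /E /exceed_event (P_exceed Sm J (fun=> u)). Qed.

Lemma card_setC_draw S : #|S| = m -> #|~: S|%:R = N.
Proof.
by move=> Sm; have := cardsC S; rewrite card_ord Sm => /(canRL (addKn m)) ->; rewrite natrB.
Qed.

Lemma expected_count_null S : #|S| = m ->
  \sum_(i in ~: S) fine (P (E S [set i])) = N * (Cnm^-1 * p).
Proof.
move=> Sm; rewrite (eq_bigr (fun=> Cnm^-1 * p)) => [|i].
  by rewrite sumr_const -(card_setC_draw Sm) mulr_natl.
by rewrite inE => iS; rewrite prob_exceed_event // big_set1 (negbTE iS) subr0.
Qed.

Lemma expected_count_signal S : #|S| = m ->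
  \sum_(i in S) fine (P (E S [set i])) = m%:R * (Cnm^-1 * q).
Proof.
move=> Sm; rewrite (eq_bigr (fun=> Cnm^-1 * q)) => [|i iS].
  by rewrite sumr_const mulr_natl Sm.
by rewrite prob_exceed_event // big_set1 iS.
Qed.

Lemma expected_pair_count_null S : #|S| = m ->
  \sum_(i in ~: S) \sum_(j in ~: S) fine (P (E S [set i; j])) =
    N * (Cnm^-1 * (N * p ^+ 2 + (p - p ^+ 2))).
Proof.
move=> Sm; rewrite (eq_bigr (fun=> Cnm^-1 * (N * p ^+ 2 + (p - p ^+ 2)))) => [|i iS].
  by rewrite sumr_const -mulr_natl card_setC_draw.
rewrite (eq_bigr (fun j => Cnm^-1 * (p ^+ 2 + (if i == j then p - p ^+ 2 else 0))))
    => [|j jS].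
  rewrite -big_distrr big_split /= sumr_const -mulr_natl card_setC_draw //.
  by rewrite (bigD1 i) //= eqxx big1 ?addr0 // => j /andP[_ ji]; rewrite eq_sym (negbTE ji).
rewrite !inE in iS jS; rewrite prob_exceed_event //.
have [<-|ij] := eqVneq i j.
  by rewrite finset.setUid big_set1 (negbTE iS) subr0 addrC subrK.
rewrite big_setU1 ?big_set1 /= ?finset.in_set1 //.
by rewrite (negbTE iS) (negbTE jS) !subr0 addr0 expr2.
Qed.

Let c := K / (K + 2).
Let a := 2 * c / (K * m%:R).
Let b := - (c / (K * m%:R) ^+ 2).

(* On the event [F = S] only the [S]-summand is nonzero, and it is the
   minorant of [oracle_loss_ge_quad_minorant] at level [u]. *)
Definition minorant_rv w : R :=
  \sum_(S in [set S : {set 'I_n} | #|S| == m]%SET) (a * count_above F X u S (~: S) w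
    + b * pair_count_above F X u S (~: S) w - m%:R^-1 * count_above F X u S S w).

Lemma minorant_rv_le w : minorant_rv w <= oracle_loss (F w) (X^~ w).
Proof.
set rej := rej_set (X^~ w) u.
pose g S :=
  a * #|~: S :&: rej|%:R + b * #|~: S :&: rej|%:R ^+ 2 - m%:R^-1 * #|S :&: rej|%:R.
have -> : minorant_rv w = \sum_(S in [set S : {set 'I_n} | #|S| == m]%SET) (F w == S)%:R * g S.
  by apply: eq_bigr => S _; rewrite !count_aboveE pair_count_aboveE /g; ring.
have [Fm|Fm] := boolP (F w \in [set S : {set 'I_n} | #|S| == m]%SET); last first.
  rewrite big1 ?oracle_loss_ge0 // => S Sm.
  have FS : (F w == S) = false by apply: contraNF Fm => /eqP ->.
  by rewrite FS mul0r.
rewrite (bigD1 (F w)) //= eqxx mul1r big1 ?addr0 => [|S /andP[_ SF]]; last first.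
  by rewrite eq_sym (negbTE SF) mul0r.
move: Fm; rewrite inE => /eqP Fm.
have K0 : 0 < K := lt_le_trans ltr01 K_ge1.
have [KN K2N mN] : [/\ K != 0, K + 2 != 0 & m%:R != 0 :> R].
  by rewrite pnatr_eq0 -lt0n m_gt0 lt0r_neq0 // lt0r_neq0 // addr_gt0.
have -> : g (F w) = quad_minorant K #|F w|%:R #|rej :\: F w|%:R
    - #|F w :&: rej|%:R / #|F w|%:R.
  rewrite Fm /g finset.setIC -finset.setDE /quad_minorant /a /b /c.
  by field; rewrite KN K2N mN.
by apply: oracle_loss_ge_quad_minorant => //; rewrite Fm.
Qed.

Let minorant_value := a * (N * p) + b * (N * (N * p ^+ 2 + (p - p ^+ 2))) - q.

Lemma has_integral_minorant_rv : has_integral P minorant_rv minorant_value.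
Proof.
have Cnm0 : Cnm != 0 by rewrite pnatr_eq0 -lt0n bin_gt0.
have m0 : m%:R != 0 :> R by rewrite pnatr_eq0 -lt0n.
have -> : minorant_value = \sum_(S in [set S : {set 'I_n} | #|S| == m]%SET)
    (a * (N * (Cnm^-1 * p)) + b * (N * (Cnm^-1 * (N * p ^+ 2 + (p - p ^+ 2))))
      - m%:R^-1 * (m%:R * (Cnm^-1 * q))).
  by rewrite sumr_const card_draws card_ord -mulr_natl /minorant_value; field; rewrite Cnm0 m0.
apply: has_integral_sum => S; rewrite inE => /eqP Sm.
rewrite -(expected_count_null Sm) -(expected_pair_count_null Sm) -(expected_count_signal Sm).
apply: has_integralB; first apply: has_integralD; apply: has_integralZ.
- exact: has_integral_count_above.
- exact: has_integral_pair_count_above.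
- exact: has_integral_count_above.
Qed.

Lemma minorant_value_ge : (K - 1) / (K + 2) - q <= minorant_value.
Proof.
have K0 : 0 < K := lt_le_trans ltr01 K_ge1.
have m1 : 1 <= m%:R :> R by rewrite ler1n.
have [KN K2N mN] : [/\ K != 0, K + 2 != 0 & m%:R != 0 :> R].
  by rewrite pnatr_eq0 -lt0n m_gt0 lt0r_neq0 // lt0r_neq0 // addr_gt0.
have c0 : 0 <= c by apply: divr_ge0; [exact: ltW | rewrite addr_ge0 // ltW].
have N0 : 0 <= N by rewrite subr_ge0 ler_nat.
rewrite /minorant_value lerD2r.
have -> : a * (N * p) + b * (N * (N * p ^+ 2 + (p - p ^+ 2))) =
    c - c / K * m%:R^-1 + c * (N * p ^+ 2) / (K * m%:R) ^+ 2.
  have -> : N * (N * p ^+ 2 + (p - p ^+ 2)) = (N * p) ^+ 2 + N * p - N * p ^+ 2 by ring.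
  by rewrite /a /b /N /p threshold; field; rewrite KN mN.
have -> : (K - 1) / (K + 2) = c - c / K by rewrite /c; field; rewrite KN K2N.
have h1 : c / K / m%:R <= c / K.
  by rewrite ler_pdivrMr ?(lt_le_trans ltr01 m1) // ler_peMr // divr_ge0 // ltW.
have h2 : 0 <= c * (N * p ^+ 2) / (K * m%:R) ^+ 2.
  by rewrite divr_ge0 ?sqr_ge0 // mulr_ge0 // mulr_ge0 // sqr_ge0.
by rewrite -[c - c / K]addr0; apply: lerD => //; rewrite lerD2l lerN2.
Qed.

Lemma expected_oracle_loss_ge :
  (((K - 1) / (K + 2) - q)%:E <= 'E_P[fun w => oracle_loss (F w) (X^~ w)])%E.
Proof.
rewrite unlock; apply: le_trans (has_integral_le_integral _ minorant_rv_le
  has_integral_minorant_rv) => [|w]; last exact: oracle_loss_ge0.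
by rewrite lee_fin minorant_value_ge.
Qed.

End ExpectedOracleLoss.

Section PowRInverse.
Variables (R : realType) (g : R).
Hypothesis g_gt0 : 0 < g.

Let gV_ge0 : 0 <= g^-1. Proof. by rewrite invr_ge0 ltW. Qed.

Lemma ler_powRV (a b : R) : 0 <= a -> 0 <= b -> (a `^ g^-1 <= b) = (a <= b `^ g).
Proof.
move=> a0 b0; apply/idP/idP => ab.
  have := ge0_ler_powR (ltW g_gt0) (powR_ge0 a _) b0 ab.
  by rewrite -powRrM mulVf ?gt_eqF // powRr1.
have := ge0_ler_powR gV_ge0 a0 (powR_ge0 b _) ab.
by rewrite -powRrM mulfV ?gt_eqF // powRr1.
Qed.

Lemma ger_powRV (a b : R) : 0 <= a -> 0 <= b -> (b <= a `^ g^-1) = (b `^ g <= a).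
Proof.
move=> a0 b0; apply/idP/idP => ba.
  have := ge0_ler_powR (ltW g_gt0) b0 (powR_ge0 a _) ba.
  by rewrite -powRrM mulVf ?gt_eqF // powRr1.
have := ge0_ler_powR gV_ge0 (powR_ge0 b _) a0 ba.
by rewrite -powRrM mulfV ?gt_eqF // powRr1.
Qed.

End PowRInverse.

Section AGGTail.
Variables (R : realType) (gamma : R) (Psi : R -> R).
Hypothesis gamma_gt0 : 0 < gamma.
Hypothesis Psi_ge0 : forall x, 0 <= Psi x.
Hypothesis Psi_AGG : AGG_right gamma Psi.

Lemma AGG_ln_bounds (e : R) : 0 < e -> \forall x \near +oo,
  - (gamma^-1 + e) * x `^ gamma <= ln (Psi x) <= - (gamma^-1 - e) * x `^ gamma.
Proof.
move=> e0; have /cvgrPdist_le /(_ e e0) near_e := Psi_AGG.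
near=> x.
have x0 : 0 < x by near: x; exact: nbhs_pinfty_gt.
have : `|- gamma^-1 - x `^ (- gamma) * ln (Psi x)| <= e by near: x; exact: near_e.
have xg : 0 < x `^ gamma by exact: powR_gt0.
rewrite ler_norml powRN mulrC => /andP[lo hi].
apply/andP; split; [rewrite -ler_pdivlMr // | rewrite -ler_pdivrMr //]; lra.
Unshelve. all: by end_near.
Qed.

Lemma ln_Psi_near_le : \forall x \near +oo, ln (Psi x) <= - (2 * gamma)^-1 * x `^ gamma.
Proof.
have e0 : 0 < (2 * gamma)^-1 by rewrite invr_gt0 mulr_gt0.
have e2 : gamma^-1 - (2 * gamma)^-1 = (2 * gamma)^-1 by field; rewrite gt_eqF.
near=> x.
have /andP[_] : - (gamma^-1 + (2 * gamma)^-1) * x `^ gamma <= ln (Psi x)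
    <= - (gamma^-1 - (2 * gamma)^-1) * x `^ gamma.
  by near: x; exact: AGG_ln_bounds.
by rewrite e2.
Unshelve. all: by end_near.
Qed.

Lemma Psi_near_gt0 : \forall x \near +oo, 0 < Psi x.
Proof.
near=> x.
have lnPsi : ln (Psi x) <= - (2 * gamma)^-1 * x `^ gamma by near: x; exact: ln_Psi_near_le.
have x0 : 0 < x by near: x; exact: nbhs_pinfty_gt.
rewrite lt0r Psi_ge0 andbT; apply: contraTneq lnPsi => ->.
by rewrite ln0 // -ltNge mulNr oppr_lt0 mulr_gt0 ?invr_gt0 ?mulr_gt0 ?powR_gt0.
Unshelve. all: by end_near.
Qed.

Lemma Psi_near_le (eta : R) : 0 < eta -> \forall x \near +oo, Psi x <= eta.
Proof.
move=> eta0; near=> x.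
have lnPsi : ln (Psi x) <= - (2 * gamma)^-1 * x `^ gamma by near: x; exact: ln_Psi_near_le.
have xr : (2 * gamma * `|ln eta|) `^ gamma^-1 <= x.
  by near: x; apply: nbhs_pinfty_ge; rewrite ger0_real ?powR_ge0.
have xg : 2 * gamma * `|ln eta| <= x `^ gamma.
  by rewrite -(ler_powRV gamma_gt0) ?(le_trans (powR_ge0 _ _) xr) // !mulr_ge0 // ltW.
have ln_le : ln (Psi x) <= ln eta.
  apply: le_trans lnPsi _; rewrite mulNr.
  have : `|ln eta| <= (2 * gamma)^-1 * x `^ gamma by rewrite ler_pdivlMl // mulr_gt0.
  by have := ler_norm (- ln eta); rewrite normrN; lra.
have [->|P0] := eqVneq (Psi x) 0; first exact: ltW.
by rewrite -ler_ln ?posrE // lt0r P0 Psi_ge0.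
Unshelve. all: by end_near.
Qed.

Lemma AGG_pow_near_ge (rho : R) : 0 < rho -> rho < 1 ->
  \forall u \near +oo, rho * gamma * - ln (Psi u) <= u `^ gamma.
Proof.
move=> rho0 rho1; pose e := (rho^-1 - 1) / gamma.
have e0 : 0 < e by rewrite divr_gt0 // subr_gt0 invf_gt1.
near=> u.
have /andP[lo _] : - (gamma^-1 + e) * u `^ gamma <= ln (Psi u)
    <= - (gamma^-1 - e) * u `^ gamma.
  by near: u; exact: AGG_ln_bounds.
have ee : gamma^-1 + e = (rho * gamma)^-1 by rewrite /e; field; rewrite !gt_eqF.
rewrite ee mulNr in lo; rewrite -ler_pdivlMl ?mulr_gt0 //; lra.
Unshelve. all: by end_near.
Qed.

Hypothesis Psi_cont : continuous Psi.

Lemma Psi_attains (x0 p : R) : 0 < p -> p <= Psi x0 ->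
  exists2 u, x0 <= u & Psi u = p.
Proof.
move=> p0 px0; have [M [_ HM]] := Psi_near_le p0.
pose y := Num.max x0 (M + 1).
have x0y : x0 <= y by rewrite le_max lexx.
have py : Psi y <= p by apply: HM; rewrite lt_max ltrDl ltr01 orbT.
have : Num.min (Psi x0) (Psi y) <= p <= Num.max (Psi x0) (Psi y).
  by rewrite ge_min le_max py px0 orbT.
move=> /(IVT x0y (continuous_subspaceT Psi_cont)) [u].
by rewrite in_itv /= => /andP[x0u _] Pu; exists u.
Qed.

End AGGTail.

Lemma ln_nat_near_ge (R : realType) (Z : R) : \forall n \near \oo, Z <= ln (n%:R : R).
Proof.
exists (Num.truncn (expR Z)).+1 => // n /= lt_n.
have Zn : expR Z < n%:R by apply: lt_le_trans (truncnS_gt _) _; rewrite ler_nat.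
by rewrite -ler_expR lnK ?posrE ?ltW // (lt_trans (expR_gt0 Z)).
Qed.

Lemma ln_ratio_le (R : realType) (K m A n : R) : 0 < K -> 0 < m -> m <= A -> 2 * A <= n ->
  ln (K * m / (n - m)) <= ln (2 * K) + ln A - ln n.
Proof.
move=> K0 m0 mA An.
have A0 : 0 < A := lt_le_trans m0 mA.
have [n0 nm0] : 0 < n /\ 0 < n - m by split; lra.
have p_le : K * m / (n - m) <= 2 * K * A / n.
  rewrite ler_pdivrMr // mulrAC ler_pdivlMr //.
  have : K * m * n <= K * A * n by rewrite ler_pM2r // ler_pM2l.
  have nm : 0 <= 2 * (n - m) - n by lra.
  by have := mulr_ge0 (ltW (mulr_gt0 K0 A0)) nm; lra.
rewrite -!lnM ?posrE ?mulr_gt0 // -ln_div ?posrE ?mulr_gt0 //.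
by rewrite ler_ln ?posrE ?divr_gt0 ?mulr_gt0.
Qed.

(* [K m / (n - m)] is the tail probability at the threshold of the oracle
   argument; it is at most [2 K n^-beta]. *)
Lemma m_n_near (R : realType) (beta : R) : 0 < beta -> beta < 1 -> \forall n \near \oo,
  [/\ (0 < m_n beta n)%N, (m_n beta n < n)%N & forall K, 0 < K ->
    ln (K * (m_n beta n)%:R / (n%:R - (m_n beta n)%:R)) <= ln (2 * K) - beta * ln n%:R].
Proof.
move=> beta_gt0 beta_lt1; near=> n.
have ln_ge : ln 2 / beta <= ln (n%:R : R) by near: n; exact: ln_nat_near_ge.
set l := ln (n%:R : R) in ln_ge *; set m := m_n beta n; set A := (n%:R : R) `^ (1 - beta).
have n0 : 0 < (n%:R : R).
  rewrite lt0r ler0n andbT; apply: contraTneq ln_ge => n0.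
  by rewrite /l n0 [ln 0]ln0 // -ltNge divr_gt0 // ln_gt0 // ltr1n.
have n1 : 1 <= (n%:R : R) by rewrite ler1n; rewrite ltr0n in n0.
have A1 : 1 <= A.
  by rewrite /A -[X in X <= _](powRr0 n%:R); apply: ler_powR; rewrite // subr_ge0 ltW.
have mA : m%:R <= A by rewrite /m /m_n truncn_le ltW // powR_gt0.
have m0 : (0 < m)%N by rewrite /m /m_n truncn_gt0.
have An : 2 * A <= n%:R.
  have A0 : 0 < A := lt_le_trans ltr01 A1.
  rewrite -ler_ln ?posrE ?mulr_gt0 // lnM ?posrE //.
  by rewrite /A ln_powR -/l; rewrite ler_pdivrMr // in ln_ge; lra.
split=> // [|K K0].
  by rewrite -(ltr_nat R); apply: lt_le_trans An; lra.
apply: le_trans (ln_ratio_le K0 _ mA An) _; first by rewrite ltr0n.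
by rewrite /A ln_powR -/l; lra.
Unshelve. all: by end_near.
Qed.

Lemma exponents_between (R : realFieldType) (r beta : R) : 0 < r -> r < beta ->
  exists rho1 rho, [/\ r < rho1, 0 < rho, rho < 1 & rho1 < rho * beta].
Proof.
move=> r_gt0 r_lt_beta; have [r_rho1 rho1_beta] := midf_lt r_lt_beta.
have [rho1_mid mid_beta] := midf_lt rho1_beta.
have beta_gt0 := lt_trans r_gt0 r_lt_beta.
have mid_gt0 := lt_trans (lt_trans r_gt0 r_rho1) rho1_mid.
exists ((r + beta) / 2), ((((r + beta) / 2) + beta) / 2 / beta).
by rewrite divfK ?gt_eqF // divr_gt0 // ltr_pdivrMr // mul1r.
Qed.

Section ThresholdChoice.
Variables (R : realType) (gamma beta r : R) (Psi : R -> R).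
Hypothesis gamma_gt0 : 0 < gamma.
Hypothesis beta_gt0 : 0 < beta.
Hypothesis beta_lt1 : beta < 1.
Hypothesis r_gt0 : 0 < r.
Hypothesis r_lt_beta : r < beta.
Hypothesis Psi_ge0 : forall x, 0 <= Psi x.
Hypothesis Psi_AGG : AGG_right gamma Psi.
Hypothesis Psi_cont : continuous Psi.

Lemma mu_n_gap (rho u : R) (n : nat) : r <= rho -> 0 <= ln (n%:R : R) -> 0 <= u ->
  rho * (gamma * ln n%:R) <= u `^ gamma ->
  (rho `^ gamma^-1 - r `^ gamma^-1) * (gamma * ln n%:R) `^ gamma^-1 <= u - mu_n gamma r n.
Proof.
move=> r_rho l0 u0; set G := gamma * ln n%:R => rhoG.
have G0 : 0 <= G by rewrite mulr_ge0 // ltW.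
have rho0 : 0 <= rho by apply: le_trans r_rho; exact: ltW.
have : (rho * G) `^ gamma^-1 <= u by rewrite (ler_powRV gamma_gt0) // mulr_ge0.
rewrite powRM // => {}rhoG.
have -> : mu_n gamma r n = r `^ gamma^-1 * G `^ gamma^-1.
  by rewrite /mu_n -powRM ?(ltW r_gt0) // /G mulrA [r * gamma]mulrC.
by rewrite mulrBl; lra.
Qed.

Lemma mu_n_shift_near (rho1 eta : R) : r < rho1 -> 0 < eta -> \forall n \near \oo,
  forall u, 0 <= u -> rho1 * (gamma * ln n%:R) <= u `^ gamma ->
    Psi (u - mu_n gamma r n) <= eta.
Proof.
move=> r_rho1 eta0.
have kappa0 : 0 < rho1 `^ gamma^-1 - r `^ gamma^-1.
  by rewrite subr_gt0 gt0_ltr_powR ?invr_gt0 ?nnegrE // ltW // (lt_trans r_gt0).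
have [Y [_ HY]] := Psi_near_le gamma_gt0 Psi_ge0 Psi_AGG eta0.
near=> n.
have ln_ge : ((`|Y| + 1) / (rho1 `^ gamma^-1 - r `^ gamma^-1)) `^ gamma / gamma
    <= ln (n%:R : R).
  by near: n; exact: ln_nat_near_ge.
move=> u u0 hu.
have l0 : 0 <= ln (n%:R : R) by apply: le_trans ln_ge; rewrite divr_ge0 ?powR_ge0 // ltW.
have gap := mu_n_gap (ltW r_rho1) l0 u0 hu.
have Y_le : `|Y| + 1 <=
    (rho1 `^ gamma^-1 - r `^ gamma^-1) * (gamma * ln n%:R) `^ gamma^-1.
  have gl0 : 0 <= gamma * ln n%:R by rewrite mulr_ge0 // ltW.
  have Y0 : 0 <= (`|Y| + 1) / (rho1 `^ gamma^-1 - r `^ gamma^-1).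
    by rewrite divr_ge0 // ltW.
  rewrite mulrC -ler_pdivrMr // (ger_powRV gamma_gt0) //.
  by rewrite ler_pdivrMr // in ln_ge; rewrite [gamma * _]mulrC.
apply: (HY (u - mu_n gamma r n)); apply: lt_le_trans gap; apply: lt_le_trans Y_le.
by rewrite (le_lt_trans (ler_norm Y)) // ltrDl.
Unshelve. all: by end_near.
Qed.

Lemma threshold_near (K eta : R) : 1 <= K -> 0 < eta -> \forall n \near \oo,
  [/\ (0 < m_n beta n)%N, (m_n beta n < n)%N & exists2 u,
    (n%:R - (m_n beta n)%:R) * Psi u = K * (m_n beta n)%:R &
    Psi (u - mu_n gamma r n) <= eta].
Proof.
move=> K1 eta0; have K0 : 0 < K := lt_le_trans ltr01 K1.
(* With r < rho1 < rho beta the threshold eventually has u^gamma >= rho1 gamma log n,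
   while mu^gamma = r gamma log n. *)
have [rho1 [rho [r_rho1 rho0 rho_lt1 rho1_rho]]] := exponents_between r_gt0 r_lt_beta.
have [X [_ near_X]] : \forall x \near +oo,
    [/\ 0 < x, 0 < Psi x & rho * gamma * - ln (Psi x) <= x `^ gamma].
  near=> x; split; near: x; first exact: nbhs_pinfty_gt.
    exact: Psi_near_gt0 gamma_gt0 Psi_ge0 Psi_AGG.
  by move: (AGG_pow_near_ge gamma_gt0 Psi_AGG rho0 rho_lt1); apply: filterS.
have X_lt u : X + 1 <= u -> X < u by apply: lt_le_trans; rewrite ltrDl.
have [_ Psi_X1 _] := near_X (X + 1) (X_lt _ (lexx _)).
near=> n.
have [m0 mn ln_p] : [/\ (0 < m_n beta n)%N, (m_n beta n < n)%N & forall K, 0 < K ->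
    ln (K * (m_n beta n)%:R / (n%:R - (m_n beta n)%:R)) <= ln (2 * K) - beta * ln n%:R].
  by near: n; exact: m_n_near.
have l1 : (ln (2 * K) - ln (Psi (X + 1))) / beta <= ln (n%:R : R).
  by near: n; exact: ln_nat_near_ge.
have l2 : rho * ln (2 * K) / (rho * beta - rho1) <= ln (n%:R : R).
  by near: n; exact: ln_nat_near_ge.
have shift : forall u, 0 <= u -> rho1 * (gamma * ln n%:R) <= u `^ gamma ->
    Psi (u - mu_n gamma r n) <= eta.
  by near: n; exact: mu_n_shift_near.
have [l lE] : exists l, ln (n%:R : R) = l by eexists.
have [m mE] : exists m, m_n beta n = m by eexists.
rewrite mE lE in m0 mn ln_p l1 l2 shift *.
have nm0 : 0 < n%:R - m%:R :> R by rewrite subr_gt0 ltr_nat.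
have p0 : 0 < K * m%:R / (n%:R - m%:R) by rewrite divr_gt0 ?mulr_gt0 ?ltr0n.
have p_le : K * m%:R / (n%:R - m%:R) <= Psi (X + 1).
  rewrite -ler_ln ?posrE //; apply: le_trans (ln_p K K0) _.
  by rewrite ler_pdivrMr // in l1; lra.
have [u Xu Pu] := Psi_attains gamma_gt0 Psi_ge0 Psi_AGG Psi_cont p0 p_le.
have [u0 _ pow_u] := near_X u (X_lt u Xu).
split=> //; exists u; first by rewrite Pu mulrC divfK ?gt_eqF.
apply: shift (ltW u0) _; rewrite Pu in pow_u.
have : rho * gamma * (beta * l - ln (2 * K))
    <= rho * gamma * - ln (K * m%:R / (n%:R - m%:R)).
  by apply: ler_wpM2l; [rewrite mulr_ge0 // ltW | have := ln_p K K0; lra].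
rewrite ler_pdivrMr ?subr_gt0 // in l2.
by have := ler_wpM2l (ltW gamma_gt0) l2; lra.
Unshelve. all: by end_near.
Qed.

End ThresholdChoice.

Lemma limn_einf_ge_near (R : realType) (u : (\bar R)^nat) (x : \bar R) :
  (\forall n \near \oo, x <= u n)%E -> (x <= limn_einf u)%E.
Proof.
move=> [N _ uN]; rewrite limn_einf_lim; apply: lime_ge; first exact: is_cvg_einfs.
exists N => // n Nn; apply: le_ereal_inf_tmp => _ [k /= nk <-].
by apply: uN; exact: leq_trans nk.
Qed.

Theorem theorem1 (R : realType) (gamma beta r : R) (Psi : R -> R)
  (d : measure_display) (T : nat -> measurableType d)
  (P : forall n : nat, probability (T n) R)
  (F : forall n : nat, T n -> {set 'I_n})
  (X : forall n : nat, 'I_n -> T n -> R) :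
  1 <= gamma -> 0 < beta -> beta < 1 -> 0 < r -> r < beta ->
  continuous Psi -> is_survival_function Psi -> AGG_right gamma Psi ->
  (forall n (S : {set 'I_n}), measurable [set w | F n w = S]) ->
  (forall n (i : 'I_n), measurable_fun setT (X n i)) ->
  (forall n (S : {set 'I_n}), #|S| = m_n beta n ->
     forall (J : {set 'I_n}) (x : 'I_n -> R),
       P n [set w | F n w = S /\ forall i, i \in J -> x i <= X n i w] =
       (('C(n, m_n beta n)%:R)^-1 *
          \prod_(i in J) Psi (x i - (if i \in S then mu_n gamma r n else 0)))%:E) ->
  (1%:E <= limn_einf (fun n : nat =>
     'E_(P n)[fun w => oracle_loss (F n w) (fun i => X n i w)]))%E.
Proof.
move=> gamma_ge1 beta_gt0 beta_lt1 r_gt0 r_lt_beta Psi_cont [Q PsiQ] Psi_AGG mF mX P_exceed.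
have gamma_gt0 : 0 < gamma := lt_le_trans ltr01 gamma_ge1.
have Psi_ge0 y : 0 <= Psi y by rewrite -lee_fin PsiQ measure_ge0.
apply/lee_subgt0Pr => e e0.
have [K K_ge1 K_e] : exists2 K, 1 <= K & 1 - e / 2 <= (K - 1) / (K + 2).
  exists (1 + 6 / e); first by rewrite lerDl divr_ge0 // ltW.
  rewrite ler_pdivlMr; last by rewrite addr_gt0 // ltr_pwDr // divr_gt0.
  have -> : (1 - e / 2) * (1 + 6 / e + 2) = 6 / e - 3 * e / 2 by field; rewrite gt_eqF.
  have : 0 <= 3 * e / 2 by rewrite divr_ge0 // mulr_ge0 // ltW.
  lra.
apply: limn_einf_ge_near.
have e20 : 0 < e / 2 by rewrite divr_gt0.
have := threshold_near gamma_gt0 beta_gt0 beta_lt1 r_gt0 r_lt_beta Psi_ge0 Psi_AGG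
  Psi_cont K_ge1 e20.
apply: filterS => n [m_gt0 m_lt_n [u threshold tail]].
apply: le_trans (expected_oracle_loss_ge (mF n) (mX n) m_gt0 (ltnW m_lt_n) K_ge1
  (P_exceed n) threshold).
by rewrite -EFinB lee_fin; lra.
Qed.
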